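(* Assume $\|\hat F'(y)-\hat F'(x)\|_F\le L_{\hat F}\|y-x\|$ for all $x,y\in\mathcal F$. Let $x\in\mathcal F$, $\tau>0$, $L\ge L_{\hat F}$, and suppose $T_{L,\tau}(x)\in\mathcal F$. Then for every $r>0$, $$\frac\tau2+\frac{\hat f_2(x)}{2\tau}-\hat f_1(T_{L,\tau}(x))\ge Lr^2\varkappa\Big(\frac{\Delta_r(x)}{2\tau Lr^2}\Big),$$ where $\Delta_r(x)=\hat f_2(x)-\min_{y}\{\|\hat F(x)+\hat F'(x)(y-x)\|^2:\|y-x\|\le r\}$ and $\varkappa(t)=\frac{t^2}2$ for $t\in[0,1]$, $\varkappa(t)=t-\frac12$ for $t>1$.
   Context: Let $F:\mathbb R^n\to\mathbb R^m$ be smooth, $\hat F=\frac1{\sqrt m}F$ with Jacobian $\hat F'(x)$; Euclidean norms, $\|\cdot\|_F$ Frobenius norm; $\mathcal F\subseteq\mathbb R^n$ closed convex with nonempty interior. $\hat f_1(x)=\|\hat F(x)\|$, $\hat f_2=\hat f_1^2$, $\psi_{x,L,\tau}(y)=\frac\tau2+\frac1{2\tau}\|\hat F(x)+\hat F'(x)(y-x)\|^2+\frac L2\|y-x\|^2$, and $T_{L,\tau}(x)=\arg\min_{y\in\mathbb R^n}\psi_{x,L,\tau}(y)$. *)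

From HB Require Import structures.
From mathcomp Require Import all_boot all_order all_algebra.
From mathcomp Require Import all_classical all_reals all_analysis.
Set Implicit Arguments. Unset Strict Implicit. Unset Printing Implicit Defensive.
Import Order.TTheory GRing.Theory Num.Theory.
Import numFieldNormedType.Exports.
Local Open Scope classical_set_scope.
Local Open Scope ring_scope.

Section Defs.
Variable R : realType.

(* Frobenius norm; on column vectors 'cV_n it is the Euclidean norm. *)
Definition frob (p q : nat) (A : 'M[R]_(p, q)) : R :=
  Num.sqrt (\sum_(i < p) \sum_(j < q) A i j ^+ 2).

Definition Fhat (n m : nat) (F : 'cV[R]_n -> 'cV[R]_m) (x : 'cV[R]_n) : 'cV[R]_m :=
  (Num.sqrt (m%:R))^-1 *: F x.

Definition is_jacobian (n m : nat) (f : 'cV[R]_n -> 'cV[R]_m)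
  (Jh : 'cV[R]_n -> 'M[R]_(m, n)) : Prop :=
  forall x, differentiable f x /\ forall v, 'd f x v = Jh x *m v.

Definition fhat1 n m (F : 'cV[R]_n -> 'cV[R]_m) x : R := frob (Fhat F x).
Definition fhat2 n m (F : 'cV[R]_n -> 'cV[R]_m) x : R := fhat1 F x ^+ 2.

Definition psi n m (F : 'cV[R]_n -> 'cV[R]_m) (Jh : 'cV[R]_n -> 'M[R]_(m, n))
  (x : 'cV[R]_n) (L tau : R) (y : 'cV[R]_n) : R :=
  tau / 2 + (2 * tau)^-1 * frob (Fhat F x + Jh x *m (y - x)) ^+ 2
  + L / 2 * frob (y - x) ^+ 2.

Definition Delta n m (F : 'cV[R]_n -> 'cV[R]_m) (Jh : 'cV[R]_n -> 'M[R]_(m, n))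
  (r : R) (x : 'cV[R]_n) : R :=
  fhat2 F x - inf [set frob (Fhat F x + Jh x *m (y - x)) ^+ 2
                   | y in [set y | frob (y - x) <= r]].

Definition kappa (t : R) : R := if t <= 1 then t ^+ 2 / 2 else t - 1 / 2.

End Defs.

From HB Require Import structures.
From mathcomp Require Import all_boot all_order all_algebra.
From mathcomp Require Import all_classical all_reals all_analysis.
From mathcomp Require Import ring lra.
Set Implicit Arguments. Unset Strict Implicit. Unset Printing Implicit Defensive.
Import Order.TTheory GRing.Theory Num.Theory.
Import numFieldNormedType.Exports.
Local Open Scope classical_set_scope.
Local Open Scope ring_scope.

(* Since the Jacobian of [Fhat F] is [LF]-Lipschitz on the convex set [S], the
   linearization error at [T] is at most [LF/2 ||T - x||^2]; together with
   [a <= tau/2 + a^2/(2 tau)] this gives [fhat1 T <= psi T], and [T] minimizes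
   [psi].  Hence the left-hand side dominates [psi x - psi y] for every [y].
   For [y = x + t (z - x)] with [||z - x|| <= r], convexity of the squared norm
   bounds this from below by [t Delta_r(x) / (2 tau) - L r^2 t^2 / 2], and the
   maximum of this concave quadratic over [t] in [0, 1] is
   [L r^2 kappa (Delta_r(x) / (2 tau L r^2))]. *)

Section EuclideanNorm.
Variable R : realType.

Lemma sum_mul_sqr_le (I : finType) (u v : I -> R) :
  (\sum_i u i * v i) ^+ 2 <= (\sum_i u i ^+ 2) * (\sum_i v i ^+ 2).
Proof.
set U := \sum_i u i ^+ 2; set V := \sum_i v i ^+ 2; set W := \sum_i u i * v i.
have U_ge0 : 0 <= U by apply: sumr_ge0 => i _; exact: sqr_ge0.
have [U0|U_gt0] := eqVneq U 0.
  have u0 i : u i = 0.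
    apply/eqP; rewrite -sqrf_eq0; apply/eqP.
    by move/psumr_eq0P: U0; apply=> // j _; exact: sqr_ge0.
  rewrite /W big1 => [|i _]; last by rewrite u0 mul0r.
  by rewrite expr0n mulr_ge0 //= sumr_ge0 // => i _; exact: sqr_ge0.
have quad : \sum_i (W * u i - U * v i) ^+ 2 = U * (U * V - W ^+ 2).
  rewrite (eq_bigr (fun i => W ^+ 2 * u i ^+ 2 - 2 * W * U * (u i * v i)
                             + U ^+ 2 * v i ^+ 2)) => [|i _]; last by ring.
  rewrite big_split sumrB /= -!mulr_sumr -/U -/V -/W; ring.
have : 0 <= U * (U * V - W ^+ 2).
  by rewrite -quad sumr_ge0 // => i _; exact: sqr_ge0.
by rewrite pmulr_rge0 ?subr_ge0 // lt_def U_gt0.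
Qed.

Definition vdot k (u v : 'cV[R]_k) : R := \sum_i u i 0 * v i 0.

Lemma frob_ge0 p q (A : 'M[R]_(p, q)) : 0 <= frob A.
Proof. exact: sqrtr_ge0. Qed.

Lemma frob_sqr p q (A : 'M[R]_(p, q)) : frob A ^+ 2 = \sum_i \sum_j A i j ^+ 2.
Proof.
by rewrite sqr_sqrtr // !sumr_ge0 // => i _; rewrite sumr_ge0 // => j _; exact: sqr_ge0.
Qed.

Lemma frob_cV_sqr k (u : 'cV[R]_k) : frob u ^+ 2 = \sum_i u i 0 ^+ 2.
Proof. by rewrite frob_sqr; apply: eq_bigr => i _; rewrite big_ord1. Qed.

Lemma frob0 p q : frob (0 : 'M[R]_(p, q)) = 0.
Proof.
by rewrite /frob !big1 ?sqrtr0 // => i _; rewrite big1 // => j _; rewrite mxE expr0n.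
Qed.

Lemma frobZ p q (c : R) (A : 'M[R]_(p, q)) : frob (c *: A) = `|c| * frob A.
Proof.
rewrite -sqrtr_sqr -sqrtrM ?sqr_ge0 //; congr Num.sqrt.
rewrite mulr_sumr; apply: eq_bigr => i _; rewrite mulr_sumr.
by apply: eq_bigr => j _; rewrite mxE exprMn.
Qed.

Lemma vdotvv k (u : 'cV[R]_k) : vdot u u = frob u ^+ 2.
Proof. by rewrite frob_cV_sqr; apply: eq_bigr => i _; rewrite expr2. Qed.

Lemma vdotDr k (e u v : 'cV[R]_k) : vdot e (u + v) = vdot e u + vdot e v.
Proof. by rewrite /vdot -big_split; apply: eq_bigr => i _; rewrite mxE mulrDr. Qed.

Lemma vdotBr k (e u v : 'cV[R]_k) : vdot e (u - v) = vdot e u - vdot e v.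
Proof. by rewrite /vdot -sumrB; apply: eq_bigr => i _; rewrite !mxE mulrBr. Qed.

Lemma vdotZr k (e u : 'cV[R]_k) (c : R) : vdot e (c *: u) = c * vdot e u.
Proof. by rewrite /vdot mulr_sumr; apply: eq_bigr => i _; rewrite mxE mulrCA. Qed.

Lemma vdot_le_frob k (u v : 'cV[R]_k) : vdot u v <= frob u * frob v.
Proof.
apply: le_trans (ler_norm _) _.
rewrite -ler_sqr ?nnegrE ?mulr_ge0 ?frob_ge0 //= real_normK ?num_real //.
rewrite exprMn !frob_cV_sqr.
exact: sum_mul_sqr_le.
Qed.

Lemma frob_sqrD k (u v : 'cV[R]_k) :
  frob (u + v) ^+ 2 = frob u ^+ 2 + 2 * vdot u v + frob v ^+ 2.
Proof.
rewrite !frob_cV_sqr /vdot mulr_sumr -!big_split /=.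
by apply: eq_bigr => i _; rewrite mxE; ring.
Qed.

Lemma frobD k (u v : 'cV[R]_k) : frob (u + v) <= frob u + frob v.
Proof.
rewrite -ler_sqr ?nnegrE ?addr_ge0 ?frob_ge0 //= frob_sqrD.
have := vdot_le_frob u v; lra.
Qed.

Lemma frob_mulmx_le p q (A : 'M[R]_(p, q)) (v : 'cV[R]_q) :
  frob (A *m v) <= frob A * frob v.
Proof.
rewrite -ler_sqr ?nnegrE ?mulr_ge0 ?frob_ge0 //= exprMn !frob_cV_sqr frob_sqr.
rewrite mulr_suml; apply: ler_sum => i _; rewrite mxE.
exact: sum_mul_sqr_le.
Qed.

Lemma convex_frob_sqr k (u w : 'cV[R]_k) (t : R) : 0 <= t -> t <= 1 ->
  frob (u + t *: w) ^+ 2 <= (1 - t) * frob u ^+ 2 + t * frob (u + w) ^+ 2.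
Proof.
move=> t_ge0 t_le1; rewrite !frob_sqrD vdotZr frobZ exprMn real_normK ?num_real //.
have : 0 <= t * (1 - t) * frob w ^+ 2.
  by rewrite mulr_ge0 ?sqr_ge0 // mulr_ge0 // subr_ge0.
nra.
Qed.

End EuclideanNorm.

Section LinearizationError.
Variable R : realType.

Lemma is_derive_vdot k (f : R -> 'cV[R]_k) (e D : 'cV[R]_k) (s : R) :
  is_derive s 1 f D -> is_derive s 1 (fun t => vdot e (f t)) (vdot e D).
Proof.
move=> fD.
have coord i : is_derive s 1 (fun t => f t i 0) (D i 0).
  have fder : derivable f s 1 by [].
  apply: DeriveDef; first by move/derivable_mxP: fder; apply.
  by rewrite -(@derive_val _ _ _ _ _ _ _ fD) derive_mx ?mxE.
have -> : (fun t => vdot e (f t)) = \sum_i (e i 0 \*: (fun t => f t i 0)).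
  by apply/funext => t; rewrite fct_sumE.
exact: is_derive_sum.
Qed.

Lemma is_derive_along_line n m (G : 'cV[R]_n -> 'cV[R]_m)
    (J : 'cV[R]_n -> 'M[R]_(m, n)) (x d : 'cV[R]_n) (s : R) :
  is_jacobian G J ->
  is_derive s 1 (fun t : R => G (x + t *: d)) (J (x + s *: d) *m d).
Proof.
move=> GJ; have [dG dGE] := GJ (x + s *: d).
pose h (t : R) := x + t *: d.
have hd : is_diff s h (fun t : R => 0 + t *: d) by exact: is_diffD.
have dGh : differentiable (G \o h) s by apply: differentiable_comp.
apply: DeriveDef; first exact: diff_derivable.
by rewrite (@deriveE _ _ _ (G \o h)) // diff_comp //= dGE diff_val add0r scale1r.
Qed.

Lemma convex_segment n (S : set 'cV[R]_n) (x y : 'cV[R]_n) (t : R) :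
  convex.convex_set (S : set (convex.convex_lmodType _)) -> S x -> S y ->
  0 <= t -> t <= 1 -> S (x + t *: (y - x)).
Proof.
move=> convS Sx Sy t_ge0 t_le1.
have := convS y x (Itv01 t_ge0 t_le1) (mem_set Sy) (mem_set Sx); rewrite inE.
suff -> : x + t *: (y - x) = t *: y + (1 - t) *: x by [].
by rewrite scalerBr scalerBl scale1r addrCA.
Qed.

Lemma linearization_error_le n m (G : 'cV[R]_n -> 'cV[R]_m)
    (J : 'cV[R]_n -> 'M[R]_(m, n)) (S : set 'cV[R]_n) (LF : R) (x y : 'cV[R]_n) :
  is_jacobian G J -> convex.convex_set (S : set (convex.convex_lmodType _)) ->
  (forall u v, S u -> S v -> frob (J v - J u) <= LF * frob (v - u)) ->
  S x -> S y ->
  frob (G y - (G x + J x *m (y - x))) <= LF / 2 * frob (y - x) ^+ 2.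
Proof.
move=> GJ convS JLip Sx Sy.
set d := y - x; set e := G y - (G x + J x *m d).
set c := frob e * LF * frob d ^+ 2.
(* The quadratic correction makes [phi' <= 0] on [0, 1] by Cauchy-Schwarz and
   the Lipschitz bound; [phi 1 <= phi 0] then reads
   [||e||^2 <= ||e|| LF ||d||^2 / 2]. *)
pose phi (t : R) :=
  vdot e (G (x + t *: d)) - t * vdot e (J x *m d) - t ^+ 2 * (c / 2).
have dphi (t : R) : is_derive t 1 phi (vdot e ((J (x + t *: d) - J x) *m d) - t * c).
  have := is_derive_vdot e (is_derive_along_line x d t GJ) => ?.
  apply: is_derive_eq; rewrite mulmxBl vdotBr !scaler0 !add0r.
  by rewrite /GRing.scale /= !mulr1; lra.
have phi_mono : phi 1 <= phi 0.
  apply: (@ler0_derive1_le_cc _ phi 0 1); rewrite ?in_itv /= ?lexx ?ler01 //.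
  - move=> t; rewrite in_itv /= => /andP [t_gt0 t_lt1].
    have Sxt := convex_segment convS Sx Sy (ltW t_gt0) (ltW t_lt1).
    have JtLip := JLip _ _ Sx Sxt.
    rewrite addrAC subrr add0r frobZ ger0_norm ?(ltW t_gt0) // in JtLip.
    rewrite derive1E derive_val subr_le0.
    apply: le_trans (vdot_le_frob _ _) _.
    apply: le_trans (ler_wpM2l (frob_ge0 e) (frob_mulmx_le _ _)) _.
    have := ler_wpM2l (frob_ge0 e) (ler_wpM2r (frob_ge0 d) JtLip).
    rewrite /c; nra.
  - by apply: derivable_within_continuous => t _; exact: ex_derive.
have e_sqr_le : frob e ^+ 2 <= frob e * (LF / 2 * frob d ^+ 2).
  have ee : vdot e e = vdot e (G y) - vdot e (G x) - vdot e (J x *m d).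
    by rewrite /e vdotBr vdotDr; ring.
  have x_d : x + d = y by rewrite /d addrC subrK.
  move: phi_mono; rewrite -vdotvv ee /phi /c scale0r scale1r addr0 x_d.
  lra.
have K_ge0 : 0 <= LF / 2 * frob d ^+ 2.
  have := le_trans (frob_ge0 _) (JLip x y Sx Sy); have := frob_ge0 d; nra.
move: e_sqr_le K_ge0; set K := LF / 2 * _; have := frob_ge0 e; nra.
Qed.

End LinearizationError.

Section ScalarBounds.
Variable R : realType.

Lemma le_half_add_sqr_div (a tau : R) :
  0 < tau -> a <= tau / 2 + (2 * tau)^-1 * a ^+ 2.
Proof.
move=> tau_gt0.
have : 0 <= (a - tau) ^+ 2 / (2 * tau) by rewrite divr_ge0 ?sqr_ge0 // mulr_ge0 // ltW.
suff -> : (a - tau) ^+ 2 / (2 * tau) = tau / 2 + (2 * tau)^-1 * a ^+ 2 - a by lra.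
by field; rewrite gt_eqF.
Qed.

Lemma sub_inf_le (E : set R) (c M : R) : E !=set0 -> has_lbound E ->
  (forall e, E e -> c - e <= M) -> c - inf E <= M.
Proof.
move=> E_neq0 E_lb cEM.
have : c - M <= inf E by apply: lb_le_inf => // e /cEM; lra.
lra.
Qed.

Lemma kappa_ge0 (s : R) : 0 <= kappa s.
Proof.
by rewrite /kappa; case: ifPn => [_|]; [rewrite divr_ge0 ?sqr_ge0 | rewrite -ltNge; lra].
Qed.

Lemma mul_kappa_le (a b c : R) : 0 < b -> 0 <= a ->
  (forall t, 0 <= t -> t <= 1 -> t * a - b * t ^+ 2 / 2 <= c) -> b * kappa (a / b) <= c.
Proof.
move=> b_gt0 a_ge0 bound; rewrite /kappa; case: ifPn => [ab_le1|].
  have := bound (a / b) (divr_ge0 a_ge0 (ltW b_gt0)) ab_le1.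
  suff -> : a / b * a - b * (a / b) ^+ 2 / 2 = b * ((a / b) ^+ 2 / 2) by [].
  by field; rewrite gt_eqF.
rewrite -ltNge => _; have := bound 1 ler01 (lexx _).
suff -> : 1 * a - b * 1 ^+ 2 / 2 = b * (a / b - 1 / 2) by [].
by field; rewrite gt_eqF.
Qed.

End ScalarBounds.

Section ProximalStep.
Variables (R : realType) (n m : nat) (F : 'cV[R]_n -> 'cV[R]_m).
Variables (Jh : 'cV[R]_n -> 'M[R]_(m, n)) (x : 'cV[R]_n) (L tau : R).
Hypothesis tau_gt0 : 0 < tau.

Lemma psi_center : psi F Jh x L tau x = tau / 2 + fhat2 F x / (2 * tau).
Proof.
by rewrite /psi subrr mulmx0 addr0 frob0 expr0n /= mulr0 addr0 [_^-1 * _]mulrC.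
Qed.

Lemma fhat1_le_psi (S : set 'cV[R]_n) (LF : R) (y : 'cV[R]_n) :
  is_jacobian (Fhat F) Jh -> convex.convex_set (S : set (convex.convex_lmodType _)) ->
  (forall u v, S u -> S v -> frob (Jh v - Jh u) <= LF * frob (v - u)) ->
  LF <= L -> S x -> S y -> fhat1 F y <= psi F Jh x L tau y.
Proof.
move=> FJ convS JLip LF_le_L Sx Sy.
set lin := Fhat F x + Jh x *m (y - x).
have err := linearization_error_le FJ convS JLip Sx Sy.
have tri := frobD lin (Fhat F y - lin); rewrite addrC subrK in tri.
have := le_half_add_sqr_div (frob lin) tau_gt0.
have : LF / 2 * frob (y - x) ^+ 2 <= L / 2 * frob (y - x) ^+ 2.
  by rewrite ler_wpM2r ?sqr_ge0 // ler_pM2r.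
rewrite /fhat1 /psi -/lin; lra.
Qed.

Lemma psi_decrease_along_segment (r t : R) (z : 'cV[R]_n) :
  0 <= L -> frob (z - x) <= r -> 0 <= t -> t <= 1 ->
  t * (fhat2 F x - frob (Fhat F x + Jh x *m (z - x)) ^+ 2) / (2 * tau)
    - L * r ^+ 2 * t ^+ 2 / 2
  <= psi F Jh x L tau x - psi F Jh x L tau (x + t *: (z - x)).
Proof.
move=> L_ge0 zr t_ge0 t_le1.
rewrite psi_center /psi [x + _ - x]addrAC subrr add0r.
rewrite -scalemxAr frobZ ger0_norm // exprMn.
have := convex_frob_sqr (Fhat F x) (Jh x *m (z - x)) t_ge0 t_le1.
set q := frob (Fhat F x + _) ^+ 2; set N := frob (Fhat F x + _) ^+ 2 => N_le.
have iv_gt0 : 0 < (2 * tau)^-1 by rewrite invr_gt0 mulr_gt0.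
have := ler_wpM2l (ltW iv_gt0) N_le.
have : frob (z - x) ^+ 2 <= r ^+ 2.
  by rewrite ler_sqr ?nnegrE ?frob_ge0 // (le_trans (frob_ge0 _) zr).
move/(ler_wpM2l (mulr_ge0 (sqr_ge0 t) (divr_ge0 L_ge0 (ler0n _ 2)))).
rewrite /fhat2 /fhat1 /q; lra.
Qed.

Lemma Delta_ge0 (r : R) : 0 <= r -> 0 <= Delta F Jh r x.
Proof.
move=> r_ge0; rewrite subr_ge0; apply: ge_inf.
  by exists 0 => _ [y _ <-]; exact: sqr_ge0.
by exists x; rewrite /= ?subrr ?frob0 // mulmx0 addr0.
Qed.

Lemma Delta_gain_le (r C : R) : 0 <= L -> 0 < r ->
  (forall y, psi F Jh x L tau x - psi F Jh x L tau y <= C) ->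
  forall t, 0 <= t -> t <= 1 ->
  t * (Delta F Jh r x / (2 * tau)) - L * r ^+ 2 * t ^+ 2 / 2 <= C.
Proof.
move=> L_ge0 r_gt0 gain t t_ge0 t_le1.
have [t0|t_neq0] := eqVneq t 0.
  by have := gain x; rewrite t0 subrr mul0r expr0n /= mulr0 mul0r subr0.
have t_gt0 : 0 < t by rewrite lt_def t_neq0.
have tau2_gt0 : 0 < 2 * tau by rewrite mulr_gt0.
set M := (C + L * r ^+ 2 * t ^+ 2 / 2) * (2 * tau) / t.
have gainE u : (t * u / (2 * tau) - L * r ^+ 2 * t ^+ 2 / 2 <= C) = (u <= M).
  by rewrite lerBlDr ler_pdivrMr // ler_pdivlMr // mulrC.
rewrite mulrA gainE; apply: sub_inf_le.
- by exists (fhat2 F x), x; rewrite /= ?subrr ?frob0 ?(ltW r_gt0) // mulmx0 addr0.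
- by exists 0 => _ [y _ <-]; exact: sqr_ge0.
- move=> _ [z zr <-]; rewrite -gainE.
  exact: le_trans (psi_decrease_along_segment L_ge0 zr t_ge0 t_le1) (gain _).
Qed.

End ProximalStep.

Theorem lemma3 (R : realType) (n m : nat) (F : 'cV[R]_n -> 'cV[R]_m)
  (Jh : 'cV[R]_n -> 'M[R]_(m, n)) (S : set 'cV[R]_n) (LF : R)
  (x T : 'cV[R]_n) (tau L : R) :
  is_jacobian (Fhat F) Jh ->
  closed S -> convex.convex_set (S : set (convex.convex_lmodType _)) -> interior S !=set0 ->
  (forall u v, S u -> S v -> frob (Jh v - Jh u) <= LF * frob (v - u)) ->
  S x -> 0 < tau -> LF <= L ->
  (forall y, psi F Jh x L tau T <= psi F Jh x L tau y) ->
  S T ->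
  forall r : R, 0 < r ->
    tau / 2 + fhat2 F x / (2 * tau) - fhat1 F T
    >= L * r ^+ 2 * kappa (Delta F Jh r x / (2 * tau * L * r ^+ 2)).
Proof.
move=> FJ _ convS _ JLip Sx tau_gt0 LF_le_L T_min ST r r_gt0.
have gain y : psi F Jh x L tau x - psi F Jh x L tau y
              <= tau / 2 + fhat2 F x / (2 * tau) - fhat1 F T.
  have := fhat1_le_psi tau_gt0 FJ convS JLip LF_le_L Sx ST.
  have := T_min y; rewrite psi_center; lra.
have [L_le0|L_gt0] := leP L 0.
  have := gain x; rewrite subrr => gain_ge0.
  apply: le_trans gain_ge0.
  by rewrite mulr_le0_ge0 ?kappa_ge0 // mulr_le0_ge0 // sqr_ge0.
have Lr2_gt0 : 0 < L * r ^+ 2 by rewrite mulr_gt0 // exprn_gt0.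
have -> : Delta F Jh r x / (2 * tau * L * r ^+ 2)
          = Delta F Jh r x / (2 * tau) / (L * r ^+ 2).
  by field; rewrite !gt_eqF // ?exprn_gt0.
apply: mul_kappa_le => //.
  by rewrite divr_ge0 ?Delta_ge0 ?ltW // mulr_gt0.
move=> t t_ge0 t_le1.
by have := Delta_gain_le tau_gt0 (ltW L_gt0) r_gt0 gain t_ge0 t_le1.
Qed.
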